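(* The greedy algorithm, applied to the declared types, is a truthful mechanism without money and with verification for CAs with unknown $k$-minded bidders (single supply).
   Context: Combinatorial auction with a set $\mathsf U$ of $m$ goods, each in a single copy, and $n$ bidders. True type of bidder $i$: $t_i=(v_i,\mathcal S_i)$ with $\mathcal S_i$ a private collection of $k$ nonempty subsets of $\mathsf U$ and $v_i:\mathcal S_i\to\mathbb R_{\ge0}$ private, extended by $v_i(T)=\max\{v_i(S'):S'\in\mathcal S_i,S'\subseteq T\}$ ($0$ if none). Declarations $(w,\mathcal W)$ have the same form. Greedy algorithm on declarations $(w_i,\mathcal W_i)$: list all elementary bids $(i,S,w_i(S))$ with $S\in\mathcal W_i$, $w_i(S)>0$ in non-increasing order of value, ties broken in favour of smaller bidder index; scan the list and accept $(i,S,w_i(S))$ (allocate $S$ to $i$) iff $i$ has not yet been allocated a set and $S$ is disjoint from all previously accepted sets. Verification: bidder $i$ with true type $t_i$ facing $\mathbf b_{-i}$ may declare $b_i=(z,\mathcal T)$ only if $z(A_i(b_i,\mathbf b_{-i}))\le v_i(A_i(b_i,\mathbf b_{-i}))$. Truthful without money and with verification: for all $i$, $\mathbf b_{-i}$, true types $t_i$ and declarations $b_i$ permitted by verification, $v_i(A_i(t_i,\mathbf b_{-i}))\ge v_i(A_i(b_i,\mathbf b_{-i}))$. *)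

From HB Require Import structures.
From mathcomp Require Import all_boot all_order all_algebra.
Set Implicit Arguments. Unset Strict Implicit. Unset Printing Implicit Defensive.
Import Order.TTheory GRing.Theory Num.Theory.
Local Open Scope ring_scope.

Section Auction.
Variables (R : realFieldType) (m n : nat).

(* Goods are 'I_m, bidders are 'I_n. A type (or declaration) is a pair
   (v, S): S a collection of subsets of goods, v a valuation whose values
   matter only on S. *)
Definition bidtype := (({set 'I_m} -> R) * {set {set 'I_m}})%type.

Definition kminded (k : nat) (t : bidtype) : Prop :=
  [/\ #|t.2| = k, set0 \notin t.2 & forall S, S \in t.2 -> 0 <= t.1 S].

Definition ext_val (t : bidtype) (T : {set 'I_m}) : R :=
  \big[Num.max/0]_(S' in t.2 | S' \subset T) t.1 S'.

Definition profile := 'I_n -> bidtype.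

Definition bid := ('I_n * {set 'I_m})%type.

Definition elem_bids (b : profile) : seq bid :=
  [seq p <- [seq (i, X) | i <- enum 'I_n, X <- enum (b i).2] | 0 < (b p.1).1 p.2].

Definition bid_before (b : profile) (x y : bid) : bool :=
  let vx := (b x.1).1 x.2 in let vy := (b y.1).1 y.2 in
  (vy < vx) || ((vx == vy) &&
    ((x.1 < y.1)%N || ((x.1 == y.1) && (enum_rank x.2 <= enum_rank y.2)%N))).

Definition sorted_bids (b : profile) : seq bid := sort (bid_before b) (elem_bids b).

Definition greedy_step (acc : seq bid) (x : bid) : seq bid :=
  if (x.1 \notin [seq p.1 | p <- acc]) &&
     [disjoint x.2 & \bigcup_(p <- acc) p.2]
  then rcons acc x else acc.

Definition greedy_accepted (b : profile) : seq bid :=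
  foldl greedy_step [::] (sorted_bids b).

Definition alloc (b : profile) (i : 'I_n) : {set 'I_m} :=
  if [seq p.2 | p <- greedy_accepted b & p.1 == i] is X :: _ then X else set0.

Definition upd (b : profile) (i : 'I_n) (t : bidtype) : profile :=
  fun j => if j == i then t else b j.

End Auction.

From HB Require Import structures.
From mathcomp Require Import all_boot all_order all_algebra.
Import Order.TTheory GRing.Theory Num.Theory.
Set Implicit Arguments. Unset Strict Implicit. Unset Printing Implicit Defensive.
Local Open Scope ring_scope.

(* Fix the other declarations and compare bidder i declaring its true type
   t with a permitted deviation bi.  If the deviation wins nothing, i gets
   value 0, which truthful play cannot undercut.  If it wins A, verification
   gives 0 < bi(A) <= t(A) = t(S) for a true set S contained in A.  The key
   fact is a monotonicity property of the greedy scan (greedy_monotone):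
   raising i's best bid from (A, bi(A)) to (S, t(S)) with S a subset of A can
   only help i, because the bids of the other bidders scanned before (i, S)
   are a prefix of those scanned before (i, A), and as long as i is not
   served the greedy outcome depends on the other bidders only.  So
   truthfully i gets a set T with t(T) >= t(S) = t(A). *)

Section ScanOrder.
Variables (R : realFieldType) (m n : nat) (b : profile R m n).

(* The scan order is a total order on elementary bids, so the sorted list of
   elementary bids is uniquely determined by the set of elementary bids. *)
Lemma bid_before_trans : transitive (bid_before b).
Proof.
move=> [yi yS] [xi xS] [zi zS]; rewrite /bid_before /=.
move: ((b xi).1 xS) ((b yi).1 yS) ((b zi).1 zS) => vx vy vz.
case/orP => [h1|/andP[/eqP e1 h1]]; case/orP => [h2|/andP[/eqP e2 h2]].
- by rewrite (lt_trans h2 h1).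
- by rewrite -e2 h1.
- by rewrite e1 h2.
rewrite e1 e2 eqxx ltxx /=.
case/orP: h1 => [h1|/andP[/eqP e3 h3]]; case/orP: h2 => [h2|/andP[/eqP e4 h4]].
- by rewrite (ltn_trans h1 h2).
- by rewrite -e4 h1.
- by rewrite e3 h2.
- by rewrite e3 e4 eqxx (leq_trans h3 h4) orbT.
Qed.

Lemma bid_before_anti : antisymmetric (bid_before b).
Proof.
move=> [xi xS] [yi yS]; rewrite /bid_before /=.
move: ((b xi).1 xS) ((b yi).1 yS) => vx vy.
case/andP => /orP[h1|/andP[/eqP e1 h1]] /orP[h2|/andP[/eqP e2 h2]].
- by move: (lt_trans h1 h2); rewrite ltxx.
- by move: h1; rewrite e2 ltxx.
- by move: h2; rewrite e1 ltxx.
case/orP: h1 => [h1|/andP[/eqP e3 h3]]; case/orP: h2 => [h2|/andP[/eqP e4 h4]].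
- by move: (ltn_trans h1 h2); rewrite ltnn.
- by move: h1; rewrite e4 ltnn.
- by move: h2; rewrite e3 ltnn.
- subst; congr pair; apply/enum_rank_inj/val_inj/eqP.
  by rewrite eqn_leq h3 h4.
Qed.

Lemma bid_before_total : total (bid_before b).
Proof.
move=> [xi xS] [yi yS]; rewrite /bid_before /=.
move: ((b xi).1 xS) ((b yi).1 yS) => vx vy.
case: (ltgtP vx vy) => [h|h|e]; rewrite ?h /= ?orbT //.
case: (ltngtP xi yi) => [h|h|/val_inj ->]; rewrite ?h /= ?orbT //.
by rewrite ?eqxx ?ltnn /=; exact: leq_total.
Qed.

Lemma sorted_bids_sorted : sorted (bid_before b) (sorted_bids b).
Proof. exact/sort_sorted/bid_before_total. Qed.

Lemma bid_before_value x y : bid_before b x y -> (b y.1).1 y.2 <= (b x.1).1 x.2.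
Proof. by case/orP => [/ltW //|/andP[/eqP -> _]]. Qed.

Lemma mem_elem_bids y :
  (y \in elem_bids b) = (y.2 \in (b y.1).2) && (0 < (b y.1).1 y.2).
Proof.
rewrite mem_filter andbC; congr andb.
apply/allpairsPdep/idP => [[j [X [_ hX ->]]]|hX]; first by rewrite mem_enum in hX.
by exists y.1, y.2; rewrite !mem_enum; split => //; case: y {hX}.
Qed.

Lemma elem_bids_uniq : uniq (elem_bids b).
Proof.
apply/filter_uniq/allpairs_uniq_dep; first exact: enum_uniq.
  by move=> j _; exact: enum_uniq.
by move=> [a u] [c v] _ _ /= [-> ->].
Qed.

End ScanOrder.

(* If a bid y of another bidder precedes (i, S') under b', it precedes any bid
   (i, S) whose value under b is at most that of (i, S') under b', provided b
   and b' agree on y's bidder: ties between bidders are broken by index. *)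
Lemma bid_before_raise (R : realFieldType) (m n : nat) (b b' : profile R m n)
    (x x' y : bid m n) :
  x.1 = x'.1 -> y.1 != x.1 -> b y.1 = b' y.1 ->
  (b x.1).1 x.2 <= (b' x'.1).1 x'.2 -> bid_before b' y x' -> bid_before b y x.
Proof.
case: x x' y => [xi X] [xi' X'] [yi Y] /= <- hyi hby.
rewrite /bid_before /= hby (negbTE hyi) andFb orbF.
move: ((b xi).1 X) ((b' xi).1 X') ((b' yi).1 Y) => vx vx' vy hle.
case/orP => [lt|/andP[/eqP -> lt]]; first by rewrite (le_lt_trans hle lt).
by rewrite lt_neqAle hle andbT eq_sym lt andbT orNb.
Qed.

Lemma sorted_split (T : eqType) (r : rel T) (r_trans : transitive r) p x q :
  sorted r (p ++ x :: q) -> {in p, forall y, r y x} /\ {in q, forall y, r x y}.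
Proof.
rewrite (sorted_pairwise r_trans) pairwise_cat pairwise_cons.
case/and3P => /allrelP before _ /andP[/allP after _]; split=> y yin.
- by apply: before; rewrite ?mem_head.
- exact: after.
Qed.

Lemma cat_prefix (T : eqType) (a b c d : seq T) : a ++ b = c ++ d ->
  (exists e, a = c ++ e) \/ (exists2 y, y \in c & y \in b).
Proof.
elim: a c => [|x a IH] [|z c] /=.
- by left; exists [::].
- by move=> ->; right; exists z; rewrite !mem_head.
- by left; exists (x :: a).
- case=> -> /IH [[e ->]|[y yc yb]]; first by left; exists e.
  by right; exists y; rewrite ?in_cons ?yc ?orbT.
Qed.

Section GreedyScan.
Variables (m n : nat).
Implicit Types (acc s : seq (bid m n)) (x y : bid m n) (i : 'I_n).
Local Notation gs := (@greedy_step m n).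
Local Notation winners acc := [seq p.1 | p <- acc].

Lemma scan_extends acc s : exists r, foldl gs acc s = acc ++ r.
Proof.
elim: s acc => [|x s IH] acc /=; first by exists [::]; rewrite cats0.
have [r ->] := IH (gs acc x).
rewrite /greedy_step; case: ifP => _; last by exists r.
by exists (x :: r); rewrite -cats1 -catA.
Qed.

Lemma scan_keeps acc s y : y \in acc -> y \in foldl gs acc s.
Proof. by have [r ->] := scan_extends acc s; rewrite mem_cat => ->. Qed.

Lemma scan_mem acc s y : y \in foldl gs acc s -> (y \in acc) || (y \in s).
Proof.
elim: s acc => [|x s IH] acc /=; first by move->.
move/IH; rewrite /greedy_step in_cons; case: ifP => _; last first.
  by case/orP=> ->; rewrite ?orbT.
by rewrite mem_rcons in_cons; case/orP; [case/orP|] => ->; rewrite ?orbT.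
Qed.

Lemma scan_winners_uniq acc s : uniq (winners acc) -> uniq (winners (foldl gs acc s)).
Proof.
elim: s acc => [|x s IH] acc //= u; apply: IH.
rewrite /greedy_step; case: ifP => // /andP[h _].
by rewrite map_rcons rcons_uniq h u.
Qed.

Lemma step_accept acc x :
  (x.1 \notin winners acc) && [disjoint x.2 & \bigcup_(p <- acc) p.2] ->
  gs acc x = rcons acc x.
Proof. by rewrite /greedy_step => ->. Qed.

Lemma scan_skip_bidder i acc s :
  i \notin winners (foldl gs acc s) ->
  foldl gs acc s = foldl gs acc [seq y <- s | y.1 != i].
Proof.
elim: s acc => [|x s IH] acc //=.
case: eqP => [ex|_] /= h; last exact: IH.
rewrite /greedy_step in h *; case: ifP => acc_x in h *; last exact: IH.
move: h; have [r ->] := scan_extends (rcons acc x) s.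
by rewrite map_cat map_rcons mem_cat mem_rcons in_cons ex eqxx.
Qed.

Lemma scan_accept_split acc s y : y \in foldl gs acc s -> y \notin acc ->
  exists p q, s = p ++ y :: q /\
   (y.1 \notin winners (foldl gs acc p)) &&
   [disjoint y.2 & \bigcup_(z <- foldl gs acc p) z.2].
Proof.
elim: s acc => [|x s IH] acc /=; first by move=> ->.
move=> hy hacc; case: (boolP (y \in gs acc x)) => hs.
  move: hs; rewrite /greedy_step; case: ifP => hc; last by rewrite (negbTE hacc).
  rewrite mem_rcons in_cons (negbTE hacc) orbF => /eqP ->.
  by exists [::], s.
have [p [q [-> h]]] := IH _ hy hs.
by exists (x :: p), q.
Qed.

End GreedyScan.

Section Allocation.
Variables (R : realFieldType) (m n : nat).
Implicit Types (b : profile R m n) (i : 'I_n) (X : {set 'I_m}).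

Lemma alloc_eq b i X : (i, X) \in greedy_accepted b -> alloc b i = X.
Proof.
have : uniq [seq p.1 | p <- greedy_accepted b] := @scan_winners_uniq _ _ [::] _ isT.
rewrite /alloc; elim: (greedy_accepted b) => [|x s IH] //= /andP[nx u]; rewrite in_cons.
case/orP => [/eqP <-|hs] /=; rewrite ?eqxx //.
case: ifP => [/eqP xi|_]; last exact: IH.
by move: nx; rewrite xi (map_f _ hs).
Qed.

Lemma alloc_none b i : i \notin [seq p.1 | p <- greedy_accepted b] -> alloc b i = set0.
Proof.
move=> h; rewrite /alloc.
suff -> : [seq p <- greedy_accepted b | p.1 == i] = [::] by [].
apply/eqP; rewrite -[_ == _]negbK -has_filter.
by apply: contra h => /hasP[p pin /eqP <-]; exact: map_f.
Qed.

Lemma accepted_elem b i X :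
  (i, X) \in greedy_accepted b -> (X \in (b i).2) && (0 < (b i).1 X).
Proof. by move/scan_mem; rewrite mem_sort mem_elem_bids. Qed.

Lemma upd_same b i t : upd b i t i = t.
Proof. by rewrite /upd eqxx. Qed.

Lemma upd_other b i t j : j != i -> upd b i t j = b j.
Proof. by rewrite /upd => /negbTE ->. Qed.

End Allocation.

Section ExtendedValuation.
Variables (R : realFieldType) (m : nat) (u : bidtype R m).
Implicit Types (S T : {set 'I_m}).

Lemma ext_val_ge0 T : 0 <= ext_val u T.
Proof. exact: bigmax_ge_id. Qed.

Lemma ext_val_ub S T : S \in u.2 -> S \subset T -> u.1 S <= ext_val u T.
Proof. by move=> uS sST; apply: le_bigmax_cond; rewrite uS sST. Qed.

Lemma ext_val_set0 : set0 \notin u.2 -> ext_val u set0 = 0.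
Proof.
move=> u0; rewrite /ext_val big_pred0 // => S.
by rewrite subset0; apply/negbTE; apply: contra u0 => /andP[uS /eqP <-].
Qed.

Lemma ext_val_attained T : (forall S, S \in u.2 -> 0 <= u.1 S) ->
  0 < ext_val u T -> exists2 S, (S \in u.2) && (S \subset T) & ext_val u T = u.1 S.
Proof.
move=> u_ge0; rewrite /ext_val.
case: (pickP (fun S => (S \in u.2) && (S \subset T))) => [S0 PS0|P0]; last first.
  by rewrite big_pred0 // ltxx.
have u_ge0' S : (S \in u.2) && (S \subset T) -> 0 <= u.1 S.
  by case/andP => /u_ge0.
by have [S PS ->] := Order.TotalTheory.eq_bigmax (x := 0) S0
  (fun S => (S \in u.2) && (S \subset T)) u.1 PS0 u_ge0'; exists S.
Qed.

End ExtendedValuation.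

Section Monotonicity.
Variables (R : realFieldType) (m n : nat) (b1 b2 : profile R m n) (i : 'I_n).
Local Notation gs := (@greedy_step m n).
Local Notation others s := [seq y <- s | y.1 != i].

Hypothesis agree : forall j, j != i -> b1 j = b2 j.

Lemma others_sorted_eq : others (sorted_bids b1) = others (sorted_bids b2).
Proof.
have sorted_others b : (forall j, j != i -> b j = b1 j) ->
    sorted (bid_before b1) (others (sorted_bids b)).
  move=> hb; apply: (@sub_in_sorted _ [pred y : bid m n | y.1 != i] (bid_before b)).
  - by move=> x y /= xi yi; rewrite /bid_before !hb.
  - exact: filter_all.
  - exact/sorted_filter/sorted_bids_sorted/bid_before_trans.
apply: (sorted_eq (@bid_before_trans _ _ _ b1) (@bid_before_anti _ _ _ b1)).
- exact: sorted_others.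
- by apply: sorted_others => j /agree ->.
apply: uniq_perm; rewrite ?filter_uniq ?sort_uniq ?elem_bids_uniq // => y.
rewrite !mem_filter !mem_sort !mem_elem_bids.
by case: (boolP (y.1 != i)) => // /agree ->.
Qed.

Lemma others_before_prefix p1 A q1 p2 S q2 :
  sorted_bids b1 = p1 ++ (i, A) :: q1 -> sorted_bids b2 = p2 ++ (i, S) :: q2 ->
  (b1 i).1 A <= (b2 i).1 S -> exists e, others p1 = others p2 ++ e.
Proof.
move=> E1 E2 hAS.
have := others_sorted_eq; rewrite E1 E2 !filter_cat /= eqxx /=.
case/cat_prefix => [//|[y]]; rewrite !mem_filter => /andP[yi yp2] /andP[_ yq1].
have sorted1 := sorted_bids_sorted b1; rewrite E1 in sorted1.
have sorted2 := sorted_bids_sorted b2; rewrite E2 in sorted2.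
have A_before_y := (sorted_split (@bid_before_trans _ _ _ b1) sorted1).2 y yq1.
have y_before_S := (sorted_split (@bid_before_trans _ _ _ b2) sorted2).1 y yp2.
have y_before_A : bid_before b1 y (i, A).
  exact: (@bid_before_raise _ _ _ b1 b2 (i, A) (i, S) y erefl yi (agree yi)).
have y_eq_A : y = (i, A) by apply: (@bid_before_anti _ _ _ b1); exact/andP.
by rewrite y_eq_A eqxx in yi.
Qed.

Lemma greedy_monotone A S :
  (i, A) \in greedy_accepted b1 -> (i, S) \in elem_bids b2 -> S \subset A ->
  (b1 i).1 A <= (b2 i).1 S ->
  exists2 T, (i, T) \in greedy_accepted b2 & (b2 i).1 S <= (b2 i).1 T.
Proof.
move=> accA elemS sSA hAS.
have [p2 [q2 E2]] : exists p q, sorted_bids b2 = p ++ (i, S) :: q.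
  have : (i, S) \in sorted_bids b2 by rewrite mem_sort.
  by case/splitPr => p q; exists p, q.
have G2 : greedy_accepted b2 = foldl gs (foldl gs [::] p2) ((i, S) :: q2).
  by rewrite /greedy_accepted E2 foldl_cat.
case: (boolP (i \in [seq p.1 | p <- foldl gs [::] p2])) => [|i_free].
  case/mapP => [[j T] accT /= ej]; subst j; exists T; first by rewrite G2 scan_keeps.
  have sorted2 := sorted_bids_sorted b2; rewrite E2 in sorted2.
  have T_before_S : bid_before b2 (i, T) (i, S).
    by apply: (sorted_split (@bid_before_trans _ _ _ b2) sorted2).1; have := scan_mem accT.
  exact: bid_before_value T_before_S.
have [p1 [q1 [E1 /andP[i_free1 disjA]]]] := scan_accept_split accA isT.
have [e Ee] := others_before_prefix E1 E2 hAS.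
have [r before_A] : exists r, foldl gs [::] p1 = foldl gs [::] p2 ++ r.
  rewrite (scan_skip_bidder i_free1) Ee foldl_cat -(scan_skip_bidder i_free).
  exact: scan_extends.
exists S => //; rewrite G2 /= scan_keeps // step_accept ?mem_rcons ?mem_head //.
rewrite i_free; apply: disjointW sSA _ disjA.
by rewrite before_A big_cat /= subsetUl.
Qed.

End Monotonicity.

Theorem theorem8 (R : realFieldType) (m n k : nat)
    (bs : profile R m n) (i : 'I_n) (t bi : bidtype R m) :
  (forall j, j != i -> kminded k (bs j)) ->
  kminded k t ->
  kminded k bi ->
  (* verification: the deviation is permitted *)
  ext_val bi (alloc (upd bs i bi) i) <= ext_val t (alloc (upd bs i bi) i) ->
  ext_val t (alloc (upd bs i bi) i) <= ext_val t (alloc (upd bs i t) i).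
Proof.
move=> _ [_ t_nonempty t_ge0] _ verified.
set b1 := upd bs i bi; set b2 := upd bs i t.
have agree j : j != i -> b1 j = b2 j by move=> ji; rewrite /b1 /b2 !upd_other.
have [b1i b2i] : b1 i = bi /\ b2 i = t by rewrite /b1 /b2 !upd_same.
case: (boolP (i \in [seq p.1 | p <- greedy_accepted b1])) => [|lost]; last first.
  by rewrite (alloc_none lost) (ext_val_set0 t_nonempty) ext_val_ge0.
case/mapP => [[j A] accA /= ej]; subst j; rewrite (alloc_eq accA) in verified *.
have /andP[biA posA] := accepted_elem accA; rewrite b1i in biA posA.
have valA : bi.1 A <= ext_val t A := le_trans (ext_val_ub biA (subxx A)) verified.
have [S /andP[tS sSA] eS] := ext_val_attained t_ge0 (lt_le_trans posA valA).
have valAS : (b1 i).1 A <= (b2 i).1 S by rewrite b1i b2i -eS.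
have elemS : (i, S) \in elem_bids b2.
  by rewrite mem_elem_bids /= b2i tS -eS (lt_le_trans posA valA).
have [T accT leST] := greedy_monotone agree accA elemS sSA valAS.
have /andP[tT _] := accepted_elem accT; rewrite b2i in tT leST.
rewrite (alloc_eq accT) eS; exact: le_trans leST (ext_val_ub tT (subxx T)).
Qed.
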